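(* Let $G_1$ and $G_2$ be torsion-free groups such that: (i) in both $G_1$ and $G_2$, every subgroup commensurable to a product of two infinite groups is contained in a maximal product subgroup; (ii) in $G_1$, every maximal product subgroup $Q$ decomposes as $Q_1\times\cdots\times Q_s$ where each $Q_i$ either is infinite cyclic or admits an IMC generating set; (iii) in $G_2$, if two maximal product subgroups $P_1,P_2$ are such that $P_1\cap P_2$ has finite index in $P_1$, then $P_1=P_2$; (iv) $G_2$ has almost stable centralisers. If $G_1$ is a finite-index subgroup of $G_2$ and $P:=P_1\times\cdots\times P_s$ is a maximal product subgroup of $G_2$ such that $\mathrm{VZ}(P)=\{1\}$ and no $P_i$ is virtually a product of two infinite groups, then there exists a maximal product subgroup $R:=R_1\times\cdots\times R_s$ of $G_1$ such that each $R_i$ is a finite-index subgroup of $P_i$.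
   Context: A maximal product subgroup of a group is a maximal element (for inclusion) among subgroups decomposing as a direct product of two non-trivial groups. A group $G$ has almost stable centralisers if for all $g\in G$, $k\ge1$, $C(g)$ has finite index in $C(g^k)$. A subset $S\subset G$ is an IMC generating set if it generates $G$ and satisfies: (Independence) for all distinct $s_1,s_2\in S$ and integers $p,q\ge1$, $[s_1^p,s_2^q]\ne1$; (Maximal Centralisers) for all $s\in S$, $g\in G$, if $C(s)\subsetneq C(g)$ then $g=1$. The virtual centre $\mathrm{VZ}(G)$ is the set of elements centralising some finite-index subgroup of $G$. Commensurable means having isomorphic finite-index subgroups. *)

From Stdlib Require Import List Arith.
Import ListNotations.
Set Implicit Arguments.

Record Grp := MkGrp {
  car :> Type;
  op : car -> car -> car;
  inv : car -> car;
  one : car;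
  op_assoc : forall x y z, op x (op y z) = op (op x y) z;
  op_1l : forall x, op one x = x;
  op_Vl : forall x, op (inv x) x = one
}.
Arguments op {g} _ _.
Arguments inv {g} _.
Arguments one {g}.

Section Defs.
Context {G : Grp}.

Definition fullset : G -> Prop := fun _ => True.
Definition sub (A B : G -> Prop) := forall x, A x -> B x.
Definition same_set (A B : G -> Prop) := forall x, A x <-> B x.

Fixpoint pw (g : G) (n : nat) : G :=
  match n with 0 => one | S m => op (pw g m) g end.

Definition is_subgroup (A : G -> Prop) :=
  A one /\ (forall x y, A x -> A y -> A (op x y)) /\ (forall x, A x -> A (inv x)).

Definition finite_index (H K : G -> Prop) :=
  is_subgroup H /\ sub H K /\
  exists l : list G, forall k, K k -> exists x, In x l /\ K x /\ H (op (inv x) k).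

Definition infinite (A : G -> Prop) := ~ exists l : list G, forall x, A x -> In x l.
Definition trivial (A : G -> Prop) := forall x, A x -> x = one.

Definition torsion_free (A : G -> Prop) :=
  forall g, A g -> forall n, pw g (S n) = one -> g = one.

Definition dprod2 (P A B : G -> Prop) :=
  is_subgroup P /\ is_subgroup A /\ is_subgroup B /\ sub A P /\ sub B P /\
  (forall a b, A a -> B b -> op a b = op b a) /\
  (forall x, A x -> B x -> x = one) /\
  (forall x, P x -> exists a b, A a /\ B b /\ x = op a b).

Definition product_subgroup (P : G -> Prop) :=
  exists A B, ~ trivial A /\ ~ trivial B /\ dprod2 P A B.

Definition maximal_product_sub (Amb P : G -> Prop) :=
  sub P Amb /\ product_subgroup P /\
  forall P', sub P' Amb -> product_subgroup P' -> sub P P' -> same_set P' P.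

Fixpoint prodl (f : nat -> G) (n : nat) : G :=
  match n with 0 => one | S m => op (prodl f m) (f m) end.

Definition dprod_fam (P : G -> Prop) (Ps : nat -> G -> Prop) (s : nat) :=
  is_subgroup P /\
  (forall i, i < s -> is_subgroup (Ps i)) /\
  (forall i j, i < s -> j < s -> i <> j ->
     forall x y, Ps i x -> Ps j y -> op x y = op y x) /\
  (forall x, P x <-> exists f : nat -> G, (forall i, i < s -> Ps i (f i)) /\ x = prodl f s) /\
  (forall f g : nat -> G, (forall i, i < s -> Ps i (f i) /\ Ps i (g i)) ->
     prodl f s = prodl g s -> forall i, i < s -> f i = g i).

Definition centraliser (A : G -> Prop) (g : G) : G -> Prop :=
  fun x => A x /\ op x g = op g x.

Definition generates (S Q : G -> Prop) :=
  is_subgroup Q /\ sub S Q /\ forall K, is_subgroup K -> sub S K -> sub Q K.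

Definition commutator (x y : G) : G := op (op (inv x) (inv y)) (op x y).

Definition IMC (Q S : G -> Prop) :=
  generates S Q /\
  (forall s1 s2, S s1 -> S s2 -> s1 <> s2 -> forall p q, 1 <= p -> 1 <= q ->
     commutator (pw s1 p) (pw s2 q) <> one) /\
  (forall s g, S s -> Q g ->
     (sub (centraliser Q s) (centraliser Q g) /\ ~ sub (centraliser Q g) (centraliser Q s)) ->
     g = one).

Definition inf_cyclic (Q : G -> Prop) :=
  exists g, generates (fun x => x = g) Q /\ infinite Q.

Definition VZ (P : G -> Prop) (g : G) :=
  P g /\ exists K, finite_index K P /\ forall k, K k -> op g k = op k g.

Definition almost_stable_centralisers (Amb : G -> Prop) :=
  forall g, Amb g -> forall k, 1 <= k ->
    finite_index (centraliser Amb g) (centraliser Amb (pw g k)).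

Definition cond_iii (Amb : G -> Prop) :=
  forall P1 P2, maximal_product_sub Amb P1 -> maximal_product_sub Amb P2 ->
    finite_index (fun x => P1 x /\ P2 x) P1 -> same_set P1 P2.
End Defs.

Definition prodGrp (B C : Grp) : Grp.
Proof.
  refine (@MkGrp (B * C)%type
    (fun x y => (op (fst x) (fst y), op (snd x) (snd y)))
    (fun x => (inv (fst x), inv (snd x))) (one, one) _ _ _).
  - intros [a b] [c d] [e f]; simpl; now rewrite !op_assoc.
  - intros [a b]; simpl; now rewrite !op_1l.
  - intros [a b]; simpl; now rewrite !op_Vl.
Defined.

Definition iso_sub {G H : Grp} (A : G -> Prop) (D : H -> Prop) :=
  exists f : G -> H,
    (forall x y, A x -> A y -> f (op x y) = op (f x) (f y)) /\
    (forall x y, A x -> A y -> f x = f y -> x = y) /\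
    (forall y, D y <-> exists x, A x /\ f x = y).

Definition commens_prod_inf {G : Grp} (A : G -> Prop) :=
  exists B C : Grp, infinite (@fullset B) /\ infinite (@fullset C) /\
  exists (A' : G -> Prop) (D : prodGrp B C -> Prop),
    finite_index A' A /\ finite_index D (@fullset (prodGrp B C)) /\ iso_sub A' D.

Definition virt_prod_inf {G : Grp} (A : G -> Prop) :=
  exists B C : Grp, infinite (@fullset B) /\ infinite (@fullset C) /\
  exists A' : G -> Prop, finite_index A' A /\ iso_sub A' (@fullset (prodGrp B C)).

Definition cond_i {G : Grp} (Amb : G -> Prop) :=
  forall A, is_subgroup A -> sub A Amb -> commens_prod_inf A ->
    exists P, maximal_product_sub Amb P /\ sub A P.

Definition cond_ii {G : Grp} (Amb : G -> Prop) :=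
  forall Q, maximal_product_sub Amb Q ->
    exists (s : nat) (Qs : nat -> G -> Prop), dprod_fam Q Qs s /\
      forall i, i < s -> inf_cyclic (Qs i) \/ exists S, IMC (Qs i) S.

From Stdlib Require Import List Arith Lia Classical ClassicalEpsilon ProofIrrelevance.
Import ListNotations.

(* Let Q be the subgroup of elements of P all of whose components lie in G1; it has finite
   index in P.  P has two nontrivial factors (a single one would be all of P, a product of two
   infinite groups), so Q splits as a product of two infinite groups and, by (i) in G1, lies in
   a maximal product subgroup R of G1.  By (i) in G2, R lies in a maximal product subgroup of G2
   containing Q, which is P by (iii); so R has finite index in P.  Write R = R_1 x ... x R_t as
   in (ii).  A cyclic R_j would be central in R, hence in VZ(P) = 1.  If a generator g of an
   IMC factor R_j had nontrivial components g_a and g_b, a power h of g_a would lie in R_j with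
   C(g) <= C(h); maximality of C(g) gives equality, which makes g_b centralise R /\ P_b, of
   finite index in P_b, so g_b is in VZ(P) = 1.  Hence each generator lies in a single P_i, and
   by independence all generators of R_j lie in the same one.  So R is stable under the
   projections onto the P_i, and R is the product of the R /\ P_i, each containing the
   finite-index subgroup G1 /\ P_i of P_i. *)

Arguments op_assoc {g} x y z.
Arguments op_1l {g} x.
Arguments op_Vl {g} x.

Section GroupLaws.
Context {G : Grp}.
Implicit Types a x y : G.

Lemma op_Vr x : op x (inv x) = one.
Proof.
  rewrite <- (op_1l (op x (inv x))), <- (op_Vl (inv x)) at 1.
  rewrite <- op_assoc, (op_assoc (inv x) x (inv x)), op_Vl, op_1l.
  apply op_Vl.
Qed.

Lemma op_1r x : op x one = x.
Proof. rewrite <- (op_Vl x), op_assoc, op_Vr, op_1l. reflexivity. Qed.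

Lemma op_cancel_l a x y : op a x = op a y -> x = y.
Proof.
  intro E. rewrite <- (op_1l x), <- (op_1l y), <- (op_Vl a), <- !op_assoc, E. reflexivity.
Qed.

Lemma op_cancel_r a x y : op x a = op y a -> x = y.
Proof.
  intro E. rewrite <- (op_1r x), <- (op_1r y), <- (op_Vr a), !op_assoc, E. reflexivity.
Qed.

Lemma inv_unique_r x y : op x y = one -> y = inv x.
Proof. intro E. apply (op_cancel_l x). rewrite E, op_Vr. reflexivity. Qed.

Lemma inv_unique_l x y : op y x = one -> y = inv x.
Proof. intro E. apply (op_cancel_r x). rewrite E, op_Vl. reflexivity. Qed.

Lemma inv_inv x : inv (inv x) = x.
Proof. symmetry. apply inv_unique_r, op_Vl. Qed.

Lemma inv_one : inv (@one G) = one.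
Proof. symmetry. apply inv_unique_r, op_1l. Qed.

Lemma inv_op x y : inv (op x y) = op (inv y) (inv x).
Proof.
  symmetry. apply inv_unique_r.
  rewrite op_assoc, <- (op_assoc x y), op_Vr, op_1r, op_Vr. reflexivity.
Qed.

Lemma pw_1 x : pw x 1 = x.
Proof. apply op_1l. Qed.

Lemma pw_add x m n : pw x (m + n) = op (pw x m) (pw x n).
Proof.
  induction n as [|n IHn]; simpl.
  - rewrite Nat.add_0_r, op_1r. reflexivity.
  - rewrite Nat.add_succ_r. simpl. rewrite IHn, op_assoc. reflexivity.
Qed.

Lemma pw_lt_split x m n : m < n -> exists k, pw x n = op (pw x m) (pw x (S k)).
Proof. intro hmn. exists (n - m - 1). rewrite <- pw_add. f_equal. lia. Qed.

Lemma pw_commute x y n : op y x = op x y -> op y (pw x n) = op (pw x n) y.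
Proof.
  intro E. induction n as [|n IHn]; simpl.
  - rewrite op_1r, op_1l. reflexivity.
  - rewrite op_assoc, IHn, <- op_assoc, E, op_assoc. reflexivity.
Qed.

Lemma commute_commutator x y : op x y = op y x -> commutator x y = one.
Proof.
  intro E. unfold commutator.
  rewrite E, <- op_assoc, (op_assoc (inv y) y), op_Vl, op_1l, op_Vl. reflexivity.
Qed.

End GroupLaws.

Section Subgroups.
Context {G : Grp}.
Implicit Types (A B H K : G -> Prop) (c g x y : G).

Lemma subgroup_one {A} : is_subgroup A -> A one.
Proof. intros [h _]; exact h. Qed.

Lemma subgroup_op {A x y} : is_subgroup A -> A x -> A y -> A (op x y).
Proof. intros [_ [h _]]; apply h. Qed.

Lemma subgroup_inv {A x} : is_subgroup A -> A x -> A (inv x).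
Proof. intros [_ [_ h]]; apply h. Qed.

Lemma subgroup_pw {A g} n : is_subgroup A -> A g -> A (pw g n).
Proof.
  intros hA hg. induction n; simpl.
  - apply subgroup_one; auto.
  - apply subgroup_op; auto.
Qed.

Lemma subgroup_same_coset {H c x y} :
  is_subgroup H -> H (op (inv c) x) -> H (op (inv c) y) -> H (op (inv x) y).
Proof.
  intros hH hx hy.
  replace (op (inv x) y) with (op (inv (op (inv c) x)) (op (inv c) y)).
  - apply subgroup_op, hy; auto. apply subgroup_inv; auto.
  - rewrite inv_op, inv_inv, <- op_assoc, (op_assoc c), op_Vr, op_1l. reflexivity.
Qed.

Lemma subgroup_inter A B : is_subgroup A -> is_subgroup B -> is_subgroup (fun x => A x /\ B x).
Proof.
  intros hA hB. split; [|split].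
  - split; apply subgroup_one; auto.
  - intros x y [] []; split; apply subgroup_op; auto.
  - intros x []; split; apply subgroup_inv; auto.
Qed.

Lemma subgroup_fullset : is_subgroup (@fullset G).
Proof. split; [|split]; unfold fullset; auto. Qed.

Lemma subgroup_trivial : is_subgroup (fun y : G => y = one).
Proof.
  split; [|split]; auto.
  - intros x y -> ->. apply op_1l.
  - intros x ->. apply inv_one.
Qed.

Lemma subgroup_commutant g : is_subgroup (fun y => op g y = op y g).
Proof.
  split; [|split].
  - rewrite op_1l, op_1r. reflexivity.
  - intros x y hx hy. rewrite op_assoc, hx, <- op_assoc, hy, op_assoc. reflexivity.
  - intros x hx. transitivity (op (inv x) (op (op x g) (inv x))).
    + rewrite !op_assoc, op_Vl, op_1l. reflexivity.
    + rewrite <- hx, <- (op_assoc g x), op_Vr, op_1r. reflexivity.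
Qed.

End Subgroups.

Lemma pigeonhole_fun {T : Type} (f : nat -> T) (l : list T) :
  (forall n, In (f n) l) -> exists a b, a < b /\ f a = f b.
Proof.
  intro hf. apply NNPP. intro hinj.
  assert (hnd : NoDup (map f (seq 0 (S (length l))))).
  { apply NoDup_map_NoDup_ForallPairs; [|apply seq_NoDup].
    intros a b _ _ E. destruct (lt_eq_lt_dec a b) as [[h|h]|h]; auto;
      exfalso; apply hinj; eauto. }
  assert (hincl : incl (map f (seq 0 (S (length l)))) l).
  { intros y hy. apply in_map_iff in hy as [n [<- _]]. apply hf. }
  apply (NoDup_incl_length hnd) in hincl.
  rewrite length_map, length_seq in hincl. lia.
Qed.

Lemma pigeonhole {T : Type} (l : list T) (Q : nat -> T -> Prop) :
  (forall n, exists c, In c l /\ Q n c) -> exists a b c, a < b /\ Q a c /\ Q b c.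
Proof.
  intro hQ. destruct (hQ 0) as [c0 _].
  set (f n := epsilon (inhabits c0) (fun c => In c l /\ Q n c)).
  assert (hf : forall n, In (f n) l /\ Q n (f n)) by (intro n; apply epsilon_spec, hQ).
  destruct (pigeonhole_fun f l (fun n => proj1 (hf n))) as (a & b & hab & E).
  exists a, b, (f a). split; [exact hab|split; [apply hf|rewrite E; apply hf]].
Qed.

Section FiniteIndex.
Context {G : Grp}.
Implicit Types (H K : G -> Prop) (x : G).

Lemma finite_index_subgroup {H K} : finite_index H K -> is_subgroup H.
Proof. intros [h _]; exact h. Qed.

Lemma finite_index_sub {H K} : finite_index H K -> sub H K.
Proof. intros [_ [h _]]; exact h. Qed.

Lemma finite_index_power {H K x} :
  finite_index H K -> is_subgroup K -> K x -> exists n, H (pw x (S n)).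
Proof.
  intros [hH [_ [l hl]]] hK hx.
  destruct (pigeonhole l (fun n c => H (op (inv c) (pw x n)))) as (a & b & c & hab & ha & hb).
  { intro n. destruct (hl (pw x n)) as (c & hc & _ & h); [apply subgroup_pw; auto|eauto]. }
  destruct (pw_lt_split x _ _ hab) as [k Ek]. exists k.
  pose proof (subgroup_same_coset hH ha hb) as E. rewrite Ek, op_assoc, op_Vl, op_1l in E.
  exact E.
Qed.

Lemma finite_index_intermediate {H H' K} :
  finite_index H K -> is_subgroup H' -> sub H H' -> sub H' K -> finite_index H' K.
Proof.
  intros [_ [_ [l hl]]] hH' hHH' hH'K. split; [exact hH'|split; [exact hH'K|exists l]].
  intros k hk. destruct (hl k hk) as (c & ? & ? & ?). eauto.
Qed.

Lemma finite_index_refl {K} : is_subgroup K -> finite_index K K.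
Proof.
  intro hK. split; [exact hK|split; [intros x h; exact h|exists [one]]].
  intros k hk. exists one. rewrite inv_one, op_1l. split; [left; reflexivity|split; auto].
  apply subgroup_one; auto.
Qed.

Lemma finite_index_restrict {H K K'} :
  finite_index H K -> is_subgroup K' -> sub K' K -> finite_index (fun x => K' x /\ H x) K'.
Proof.
  intros [hH [_ [l hl]]] hK' hK'K.
  split; [apply subgroup_inter; auto|split; [intros x []; auto|]].
  (* a representative in K' of each coset c H that meets K' *)
  set (pick c := epsilon (inhabits c) (fun c' => K' c' /\ H (op (inv c) c'))).
  exists (map pick l). intros k hk.
  destruct (hl k (hK'K _ hk)) as (c & hc & _ & hck).
  assert (hpick : K' (pick c) /\ H (op (inv c) (pick c))) by (apply epsilon_spec; eauto).
  exists (pick c). split; [apply in_map; auto|split; [apply hpick|]].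
  split.
  - apply subgroup_op, hk; auto. apply subgroup_inv, hpick; auto.
  - apply (subgroup_same_coset (c := c)); auto. apply hpick.
Qed.

Lemma finite_index_inter {H H' K} :
  finite_index H K -> finite_index H' K -> finite_index (fun x => H x /\ H' x) K.
Proof.
  intros [hH [hHK [l hl]]] [hH' [_ [l' hl']]].
  split; [apply subgroup_inter; auto|split; [intros x []; auto|]].
  set (pick p := epsilon (inhabits (fst p))
     (fun c => K c /\ H (op (inv (fst p)) c) /\ H' (op (inv (snd p)) c))).
  exists (map pick (list_prod l l')). intros k hk.
  destruct (hl k hk) as (c & hc & _ & hck). destruct (hl' k hk) as (c' & hc' & _ & hck').
  assert (hpick : K (pick (c, c')) /\ H (op (inv c) (pick (c, c')))
                  /\ H' (op (inv c') (pick (c, c')))) by (apply epsilon_spec; eauto).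
  exists (pick (c, c')). split; [apply in_map, in_prod; auto|split; [apply hpick|split]].
  - apply (subgroup_same_coset (c := c)); auto. apply hpick.
  - apply (subgroup_same_coset (c := c')); auto. apply hpick.
Qed.

End FiniteIndex.

Section FiniteProducts.
Context {G : Grp}.
Implicit Types (K : G -> Prop) (f g : nat -> G) (y : G).

Lemma prodl_one f n : (forall i, i < n -> f i = one) -> prodl f n = one.
Proof. induction n; simpl; intros hf; auto. rewrite IHn, hf, op_1l; auto. Qed.

Lemma prodl_single f n a :
  a < n -> (forall i, i < n -> i <> a -> f i = one) -> prodl f n = f a.
Proof.
  induction n as [|n IHn]; intros ha hf; [lia|]. simpl.
  destruct (Nat.eq_dec a n) as [->|ne].
  - rewrite prodl_one, op_1l; auto. intros i hi. apply hf; lia.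
  - rewrite IHn, (hf n), op_1r; auto; lia.
Qed.

Lemma prodl_in K f n : is_subgroup K -> (forall i, i < n -> K (f i)) -> K (prodl f n).
Proof.
  intros hK. induction n; simpl; intros hf.
  - apply subgroup_one; auto.
  - apply subgroup_op; auto.
Qed.

Lemma prodl_commute y f n :
  (forall i, i < n -> op y (f i) = op (f i) y) -> op y (prodl f n) = op (prodl f n) y.
Proof.
  induction n; simpl; intros hf.
  - rewrite op_1l, op_1r. reflexivity.
  - rewrite op_assoc, IHn, <- op_assoc, hf, op_assoc; auto.
Qed.

Lemma prodl_op f g n :
  (forall i k, i < n -> k < i -> op (f i) (g k) = op (g k) (f i)) ->
  op (prodl f n) (prodl g n) = prodl (fun i => op (f i) (g i)) n.
Proof.
  induction n as [|n IHn]; simpl; intros hfg.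
  - apply op_1l.
  - rewrite <- IHn by (intros; apply hfg; lia).
    rewrite <- !op_assoc. f_equal. rewrite !op_assoc. f_equal.
    rewrite prodl_commute; auto.
Qed.

End FiniteProducts.

(* Arbitrary when [x] is not in [P]. *)
Definition component {G : Grp} (P : G -> Prop) (Ps : nat -> G -> Prop) (s : nat) (x : G)
  : nat -> G :=
  epsilon (inhabits (fun _ : nat => @one G))
    (fun f => P x -> (forall i, i < s -> Ps i (f i)) /\ x = prodl f s).

Section DirectProductFamily.
Context {G : Grp} {P : G -> Prop} {Ps : nat -> G -> Prop} {s : nat}.
Hypothesis hPs : dprod_fam P Ps s.
Local Notation comp := (component P Ps s).
Implicit Types (H X : G -> Prop) (f : nat -> G) (g x y z : G).

Lemma dprod_fam_subgroup : is_subgroup P.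
Proof. exact (proj1 hPs). Qed.

Lemma factor_subgroup {i} : i < s -> is_subgroup (Ps i).
Proof. destruct hPs as [_ [h _]]; auto. Qed.

Lemma factors_commute i j {x y} : i < s -> j < s -> i <> j -> Ps i x -> Ps j y -> op x y = op y x.
Proof. destruct hPs as [_ [_ [h _]]]; eauto. Qed.

Lemma component_spec {x} : P x -> (forall i, i < s -> Ps i (comp x i)) /\ x = prodl (comp x) s.
Proof.
  intro hx. generalize hx. unfold component. apply epsilon_spec.
  destruct hPs as [_ [_ [_ [hdec _]]]]. destruct (proj1 (hdec x) hx) as [f hf]. eauto.
Qed.

Lemma component_in {x i} : P x -> i < s -> Ps i (comp x i).
Proof. intros hx hi. apply (component_spec hx); auto. Qed.

Lemma prodl_component {x} : P x -> x = prodl (comp x) s.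
Proof. intro hx. apply (component_spec hx). Qed.

Lemma component_unique {x f} :
  P x -> (forall i, i < s -> Ps i (f i)) -> x = prodl f s -> forall i, i < s -> comp x i = f i.
Proof.
  intros hx hf E i hi. destruct (component_spec hx) as [hc Ec].
  destruct hPs as [_ [_ [_ [_ huniq]]]]. apply huniq; auto. congruence.
Qed.

Lemma component_factor {a y} : a < s -> Ps a y ->
  P y /\ forall i, i < s -> comp y i = if Nat.eq_dec i a then y else one.
Proof.
  intros ha hy. set (f i := if Nat.eq_dec i a then y else one).
  assert (hf : forall i, i < s -> Ps i (f i)).
  { intros i hi. unfold f. destruct (Nat.eq_dec i a) as [->|]; auto.
    apply subgroup_one, factor_subgroup; auto. }
  assert (E : y = prodl f s).
  { rewrite (prodl_single f s a ha); unfold f.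
    - destruct (Nat.eq_dec a a); congruence.
    - intros i _ ne. destruct (Nat.eq_dec i a); congruence. }
  assert (hyP : P y) by (rewrite E; apply hPs; eauto).
  split; auto. apply component_unique; auto.
Qed.

Lemma factor_sub {a y} : a < s -> Ps a y -> P y.
Proof. intros ha hy. apply (component_factor ha hy). Qed.

Lemma component_factor_self {a y} : a < s -> Ps a y -> comp y a = y.
Proof.
  intros ha hy. rewrite (proj2 (component_factor ha hy) a ha).
  destruct (Nat.eq_dec a a); congruence.
Qed.

Lemma component_factor_other {a y i} : a < s -> Ps a y -> i < s -> i <> a -> comp y i = one.
Proof.
  intros ha hy hi ne. rewrite (proj2 (component_factor ha hy) i hi).
  destruct (Nat.eq_dec i a); congruence.
Qed.

Lemma component_op {x y i} : P x -> P y -> i < s -> comp (op x y) i = op (comp x i) (comp y i).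
Proof.
  intros hx hy hi. pose proof dprod_fam_subgroup as hP.
  apply (component_unique (f := fun i => op (comp x i) (comp y i))); auto.
  - apply subgroup_op; auto.
  - intros k hk. apply subgroup_op; [apply factor_subgroup|apply component_in..]; auto.
  - rewrite <- prodl_op, <- !prodl_component; auto.
    intros a b ha hb. apply (factors_commute a b); try apply component_in; auto; lia.
Qed.

Lemma component_one {i} : i < s -> comp one i = one.
Proof.
  intro hi. apply (component_unique (f := fun _ => one)); auto.
  - apply subgroup_one, dprod_fam_subgroup.
  - intros k hk. apply subgroup_one, factor_subgroup; auto.
  - rewrite prodl_one; auto.
Qed.

Lemma component_inv {x i} : P x -> i < s -> comp (inv x) i = inv (comp x i).
Proof.
  intros hx hi. pose proof dprod_fam_subgroup as hP.
  apply inv_unique_l. rewrite <- component_op, op_Vl; auto using component_one.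
  apply subgroup_inv; auto.
Qed.

Lemma component_prodl {f n i} :
  i < s -> (forall k, k < n -> P (f k)) -> comp (prodl f n) i = prodl (fun k => comp (f k) i) n.
Proof.
  intros hi. induction n as [|n IHn]; simpl; intros hf.
  - apply component_one; auto.
  - rewrite component_op, IHn; auto. apply prodl_in; auto. apply dprod_fam_subgroup.
Qed.

Lemma commute_of_components {x z} :
  P x -> (forall i, i < s -> op z (comp x i) = op (comp x i) z) -> op z x = op x z.
Proof. intros hx hz. rewrite (prodl_component hx). apply prodl_commute; auto. Qed.

Lemma commute_component {y x i} :
  P y -> P x -> i < s -> op y x = op x y -> op y (comp x i) = op (comp x i) y.
Proof.
  intros hy hx hi E. symmetry. apply commute_of_components; auto.
  intros m hm. destruct (Nat.eq_dec m i) as [->|ne].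
  - rewrite <- !component_op, E; auto.
  - apply (factors_commute i m); auto; apply component_in; auto.
Qed.

Lemma commute_factor_component {a g x} :
  a < s -> Ps a g -> P x -> op (comp x a) g = op g (comp x a) -> op x g = op g x.
Proof.
  intros ha hg hx E. symmetry. apply commute_of_components; auto.
  intros m hm. destruct (Nat.eq_dec m a) as [->|ne]; auto.
  apply (factors_commute a m); auto. apply component_in; auto.
Qed.

Lemma eq_one_of_components {x} : P x -> (forall i, i < s -> comp x i = one) -> x = one.
Proof. intros hx h1. rewrite (prodl_component hx). apply prodl_one; auto. Qed.

Lemma factor_of_components {a x} :
  a < s -> P x -> (forall i, i < s -> i <> a -> comp x i = one) -> Ps a x.
Proof.
  intros ha hx h1. rewrite (prodl_component hx), (prodl_single _ s a); auto.
  apply component_in; auto.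
Qed.

Lemma factor_of_single_support {x} : P x -> x <> one ->
  (forall a b, a < s -> b < s -> a <> b -> comp x a = one \/ comp x b = one) ->
  exists i, i < s /\ Ps i x.
Proof.
  intros hx ne hsupp. apply NNPP. intro hno. apply ne, eq_one_of_components; auto.
  intros i hi. apply NNPP. intro hxi. apply hno. exists i. split; auto.
  apply factor_of_components; auto. intros k hk hki.
  destruct (hsupp k i hk hi hki); [assumption|contradiction].
Qed.

Lemma finite_index_component_preimage {b H} :
  b < s -> finite_index H (Ps b) -> finite_index (fun x => P x /\ H (comp x b)) P.
Proof.
  intros hb [hH [hHb [l hl]]]. pose proof dprod_fam_subgroup as hP.
  split; [split; [|split]|split].
  - split; [apply subgroup_one; auto|]. rewrite component_one; auto. apply subgroup_one; auto.
  - intros x y [hx hxb] [hy hyb]. split; [apply subgroup_op; auto|].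
    rewrite component_op; auto. apply subgroup_op; auto.
  - intros x [hx hxb]. split; [apply subgroup_inv; auto|].
    rewrite component_inv; auto. apply subgroup_inv; auto.
  - intros x []; auto.
  - exists l. intros k hk.
    destruct (hl (comp k b)) as (c & hc & hcb & hck); [apply component_in; auto|].
    assert (hcP : P c) by (apply (factor_sub hb); auto).
    exists c. split; [auto|split; [auto|split]].
    + apply subgroup_op; auto. apply subgroup_inv; auto.
    + rewrite component_op, component_inv, component_factor_self; auto.
      apply subgroup_inv; auto.
Qed.

Lemma dprod2_split_factor {X a} :
  is_subgroup X -> sub X P -> a < s -> (forall x, X x -> X (comp x a)) ->
  dprod2 X (fun x => X x /\ Ps a x) (fun x => X x /\ comp x a = one).
Proof.
  intros hX hXP ha hcl. pose proof dprod_fam_subgroup as hP.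
  split; [exact hX|split; [apply subgroup_inter; auto; apply factor_subgroup; auto|]].
  split; [split; [|split]|].
  { split; [apply subgroup_one|apply component_one]; auto. }
  { intros x y [hx ex] [hy ey]. split; [apply subgroup_op; auto|].
    rewrite component_op, ex, ey, op_1l; auto. }
  { intros x [hx ex]. split; [apply subgroup_inv; auto|].
    rewrite component_inv, ex, inv_one; auto. }
  split; [intros x []; auto|split; [intros x []; auto|split; [|split]]].
  - intros y x [hy hya] [hx ex]. apply commute_of_components; auto.
    intros m hm. destruct (Nat.eq_dec m a) as [->|ne].
    + rewrite ex, op_1l, op_1r. reflexivity.
    + apply (factors_commute a m); auto. apply component_in; auto.
  - intros x [_ hxa] [_ ex]. rewrite <- ex, component_factor_self; auto.
  - intros x hx. exists (comp x a), (op (inv (comp x a)) x).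
    assert (hxa : X (comp x a)) by auto.
    split; [split; auto; apply component_in; auto|split; [split|]].
    + apply subgroup_op; auto. apply subgroup_inv; auto.
    + rewrite component_op, component_inv, component_factor_self, op_Vl;
        auto using component_in; apply subgroup_inv; auto.
    + rewrite op_assoc, op_Vr, op_1l. reflexivity.
Qed.

Lemma dprod_fam_restrict {X} :
  is_subgroup X -> sub X P -> (forall x i, X x -> i < s -> X (comp x i)) ->
  dprod_fam X (fun i x => X x /\ Ps i x) s.
Proof.
  intros hX hXP hcl. pose proof hPs as [_ [hfac [hcomm [_ huniq]]]].
  split; [exact hX|split; [|split; [|split]]].
  - intros i hi. apply subgroup_inter; auto.
  - intros i j x y hi hj hij [_ hx] [_ hy]. eauto.
  - intro x. split.
    + intro hx. exists (comp x). split; [|apply prodl_component; auto].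
      intros i hi. split; [apply hcl|apply component_in]; auto.
    + intros [f [hf ->]]. apply prodl_in; auto. intros i hi. apply hf; auto.
  - intros f g hfg E i hi. apply huniq; auto.
    intros k hk. destruct (hfg k hk) as [[_ ?] [_ ?]]; auto.
Qed.

End DirectProductFamily.

Lemma sig_eq {G : Grp} (A : G -> Prop) (x y : {z | A z}) : proj1_sig x = proj1_sig y -> x = y.
Proof. destruct x, y; simpl; intros ->. f_equal. apply proof_irrelevance. Qed.

Definition subGrp {G : Grp} (A : G -> Prop) (hA : is_subgroup A) : Grp.
Proof.
  refine (@MkGrp {x | A x}
    (fun x y => exist _ (op (proj1_sig x) (proj1_sig y))
                  (subgroup_op hA (proj2_sig x) (proj2_sig y)))
    (fun x => exist _ (inv (proj1_sig x)) (subgroup_inv hA (proj2_sig x)))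
    (exist _ one (subgroup_one hA)) _ _ _);
  intros; apply sig_eq; simpl; auto using op_assoc, op_1l, op_Vl.
Defined.

Section ProductsOfInfiniteGroups.
Context {G : Grp}.
Hypothesis htf : torsion_free (@fullset G).
Implicit Types (A B X Y : G -> Prop).

Lemma subGrp_infinite A (hA : is_subgroup A) : ~ trivial A -> infinite (@fullset (subGrp A hA)).
Proof.
  intros hnt [l hl]. apply hnt. intros g hg. apply NNPP. intro ne.
  destruct (pigeonhole l (fun n (c : subGrp A hA) => proj1_sig c = pw g n))
    as (a & b & c & hab & ha & hb).
  { intro n. exists (exist A (pw g n) (subgroup_pw n hA hg)). split; auto. apply hl. exact I. }
  destruct (pw_lt_split g a b hab) as [m Em].
  apply ne, (htf g I m), (op_cancel_l (pw g a)). rewrite op_1r, <- Em. congruence.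
Qed.

Lemma dprod2_unique {X A B a b a' b'} :
  dprod2 X A B -> A a -> B b -> A a' -> B b' -> op a b = op a' b' -> a = a' /\ b = b'.
Proof.
  intros [_ [hA [hB [_ [_ [_ [hAB _]]]]]]] ha hb ha' hb' E.
  assert (E' : op (inv a') a = op b' (inv b)).
  { apply (op_cancel_l a'), (op_cancel_r b).
    rewrite !op_assoc, op_Vr, op_1l, <- op_assoc, op_Vl, op_1r. exact E. }
  assert (E1 : op (inv a') a = one).
  { apply hAB; [|rewrite E']; apply subgroup_op; auto; apply subgroup_inv; auto. }
  assert (a = a') as <- by (rewrite (inv_unique_r _ _ E1); apply inv_inv).
  split; [reflexivity|]. apply (op_cancel_l a), E.
Qed.

Lemma dprod2_iso_prodGrp {X Y A B} (hA : is_subgroup A) (hB : is_subgroup B) :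
  dprod2 X A B -> (forall x, Y x <-> X x) ->
  iso_sub Y (@fullset (prodGrp (subGrp A hA) (subGrp B hB))).
Proof.
  intros hd hYX. pose proof hd as [hX [_ [_ [hAX [hBX [hcomm [_ hdec]]]]]]].
  set (T := prodGrp (subGrp A hA) (subGrp B hB)).
  set (mul (p : T) := op (proj1_sig (fst p)) (proj1_sig (snd p))).
  assert (mul_op : forall p q, mul (op p q) = op (mul p) (mul q)).
  { intros [[a1 ?] [b1 ?]] [[a2 ?] [b2 ?]]. unfold mul. simpl.
    rewrite !op_assoc. f_equal. rewrite <- !op_assoc. f_equal. apply hcomm; auto. }
  set (f x := epsilon (inhabits (@one T)) (fun p : T => X x -> x = mul p)).
  assert (hf : forall x, X x -> x = mul (f x)).
  { intros x hx. generalize hx. apply epsilon_spec.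
    destruct (hdec x hx) as (a & b & ha & hb & E). exists (exist A a ha, exist B b hb). auto. }
  assert (hf_mul : forall p, f (mul p) = p).
  { intros [[a ha] [b hb]].
    assert (hab : X (mul (exist A a ha, exist B b hb))) by (apply subgroup_op; auto).
    pose proof (hf _ hab) as E. destruct (f _) as [[a' ha'] [b' hb']]. unfold mul in E; simpl in E.
    destruct (dprod2_unique hd ha hb ha' hb' E) as [<- <-].
    f_equal; apply sig_eq; reflexivity. }
  exists f. split; [|split].
  - intros x y hx hy. apply hYX in hx, hy.
    rewrite <- (hf_mul (op (f x) (f y))), mul_op, <- (hf x), <- (hf y); auto.
  - intros x y hx hy E. apply hYX in hx, hy. rewrite (hf x), (hf y), E; auto.
  - intro p. split; [intros _|intros _; exact I].
    exists (mul p). split; [apply hYX; destruct p as [[a ?] [b ?]]; apply subgroup_op; auto|].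
    apply hf_mul.
Qed.

Lemma dprod2_commens_prod_inf {X A B} :
  dprod2 X A B -> ~ trivial A -> ~ trivial B -> commens_prod_inf X.
Proof.
  intros hd hnA hnB. pose proof hd as [hX [hA [hB _]]].
  exists (subGrp A hA), (subGrp B hB).
  split; [apply subGrp_infinite; auto|split; [apply subGrp_infinite; auto|]].
  exists X, fullset. split; [apply finite_index_refl; auto|split].
  - apply finite_index_refl, subgroup_fullset.
  - apply (dprod2_iso_prodGrp hA hB hd). reflexivity.
Qed.

Lemma dprod2_virt_prod_inf {X Y A B} :
  dprod2 X A B -> ~ trivial A -> ~ trivial B ->
  is_subgroup Y -> (forall x, Y x <-> X x) -> virt_prod_inf Y.
Proof.
  intros hd hnA hnB hY hYX. pose proof hd as [hX [hA [hB _]]].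
  exists (subGrp A hA), (subGrp B hB).
  split; [apply subGrp_infinite; auto|split; [apply subGrp_infinite; auto|]].
  exists Y. split; [apply finite_index_refl; auto|]. apply (dprod2_iso_prodGrp hA hB hd hYX).
Qed.

End ProductsOfInfiniteGroups.

Lemma nontrivial_meets_finite_index {G : Grp} {A H : G -> Prop} :
  torsion_free (@fullset G) -> finite_index H fullset -> is_subgroup A -> ~ trivial A ->
  exists q, A q /\ H q /\ q <> one.
Proof.
  intros htf hH hA hnt. apply NNPP. intro hno. apply hnt. intros p hp. apply NNPP. intro ne.
  destruct (finite_index_power (x := p) hH subgroup_fullset I) as [n hn].
  apply hno. exists (pw p (S n)). split; [apply subgroup_pw; auto|split; auto].
  intro E. apply ne, (htf p I n E).
Qed.

Definition components_in {G : Grp} (P : G -> Prop) (Ps : nat -> G -> Prop) (s : nat)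
  (H : G -> Prop) (n : nat) (x : G) : Prop :=
  P x /\ forall i, i < n -> H (component P Ps s x i).

Section ComponentsIn.
Context {G : Grp} {P : G -> Prop} {Ps : nat -> G -> Prop} {s : nat} {H : G -> Prop}.
Hypotheses (hPs : dprod_fam P Ps s) (hH : is_subgroup H).
Local Notation comp := (component P Ps s).
Local Notation Qn := (components_in P Ps s H).

Lemma components_in_subgroup n : n <= s -> is_subgroup (Qn n).
Proof.
  intro hn. pose proof (dprod_fam_subgroup hPs) as hP. split; [|split].
  - split; [apply subgroup_one; auto|]. intros i hi.
    rewrite (component_one hPs) by lia. apply subgroup_one; auto.
  - intros x y [hx hxH] [hy hyH]. split; [apply subgroup_op; auto|]. intros i hi.
    rewrite (component_op hPs) by (auto; lia). apply subgroup_op; auto.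
  - intros x [hx hxH]. split; [apply subgroup_inv; auto|]. intros i hi.
    rewrite (component_inv hPs) by (auto; lia). apply subgroup_inv; auto.
Qed.

Lemma components_in_finite_index n : finite_index H fullset -> n <= s -> finite_index (Qn n) P.
Proof.
  intros hHfi. pose proof (dprod_fam_subgroup hPs) as hP.
  induction n as [|n IHn]; intro hn.
  - apply (finite_index_intermediate (finite_index_refl hP)).
    + apply components_in_subgroup; lia.
    + intros x hx. split; [auto|intros; lia].
    + intros x []; auto.
  - assert (hfac : finite_index (fun x => Ps n x /\ H x) (Ps n)).
    { apply (finite_index_restrict hHfi).
      - apply (factor_subgroup hPs). lia.
      - intros x _. exact I. }
    pose proof (finite_index_component_preimage hPs (b := n) ltac:(lia) hfac) as hpre.
    apply (finite_index_intermediate (finite_index_inter (IHn ltac:(lia)) hpre)).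
    + apply components_in_subgroup; auto.
    + intros x [[hx hxH] [_ [_ hxn]]]. split; auto.
      intros i hi. destruct (Nat.eq_dec i n) as [->|]; auto. apply hxH. lia.
    + intros x []; auto.
Qed.

Lemma components_in_sub : sub (Qn s) H.
Proof.
  intros x [hx hxH]. rewrite (prodl_component hPs hx). apply prodl_in; auto.
Qed.

Lemma factor_components_in {a x} : a < s -> Ps a x -> H x -> Qn s x.
Proof.
  intros ha hx hxH. split; [apply (factor_sub hPs ha hx)|]. intros i hi.
  destruct (Nat.eq_dec i a) as [->|ne].
  - rewrite (component_factor_self hPs ha hx). exact hxH.
  - rewrite (component_factor_other hPs ha hx hi ne). apply subgroup_one; auto.
Qed.

Lemma components_in_commens_prod_inf a b :
  torsion_free (@fullset G) -> finite_index H fullset ->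
  a < s -> b < s -> a <> b -> ~ trivial (Ps a) -> ~ trivial (Ps b) -> commens_prod_inf (Qn s).
Proof.
  intros htf hHfi ha hb hab hna hnb.
  assert (hQ : is_subgroup (Qn s)) by (apply components_in_subgroup; auto).
  assert (hcl : forall x, Qn s x -> Qn s (comp x a)).
  { intros x [hx hxH]. apply (factor_components_in ha); auto. apply component_in; auto. }
  apply (dprod2_commens_prod_inf htf (dprod2_split_factor hPs hQ (fun x hx => proj1 hx) ha hcl)).
  - intro htriv.
    destruct (nontrivial_meets_finite_index htf hHfi (factor_subgroup hPs ha) hna)
      as (q & hq & hqH & ne).
    apply ne, htriv. split; auto. apply (factor_components_in ha); auto.
  - intro htriv.
    destruct (nontrivial_meets_finite_index htf hHfi (factor_subgroup hPs hb) hnb)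
      as (q & hq & hqH & ne).
    apply ne, htriv. split; [apply (factor_components_in hb); auto|].
    apply (component_factor_other hPs hb hq ha); auto.
Qed.

Lemma finite_index_factor_meet R a :
  finite_index H fullset -> is_subgroup R -> sub (Qn s) R -> a < s ->
  finite_index (fun x => R x /\ Ps a x) (Ps a).
Proof.
  intros hHfi hR hQR ha.
  apply (finite_index_intermediate
           (finite_index_restrict (K' := Ps a) hHfi (factor_subgroup hPs ha) (fun _ _ => I))).
  - apply subgroup_inter; [exact hR|exact (factor_subgroup hPs ha)].
  - intros x [hx hxH]. split; [|exact hx]. apply hQR, (factor_components_in ha hx hxH).
  - intros x []; auto.
Qed.

End ComponentsIn.

Lemma two_nontrivial_factors {G : Grp} {P : G -> Prop} {Ps : nat -> G -> Prop} {s : nat} :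
  torsion_free (@fullset G) -> product_subgroup P -> dprod_fam P Ps s ->
  (forall i, i < s -> ~ virt_prod_inf (Ps i)) ->
  exists a b, a < s /\ b < s /\ a <> b /\ ~ trivial (Ps a) /\ ~ trivial (Ps b).
Proof.
  intros htf (A & B & hnA & hnB & hAB) hPs hnv. pose proof hAB as [_ [_ [_ [hAP _]]]].
  assert (hnt : forall x i, P x -> i < s -> component P Ps s x i <> one -> ~ trivial (Ps i)).
  { intros x i hx hi ne htriv. apply ne, htriv, component_in; auto. }
  assert (exists a, a < s /\ ~ trivial (Ps a)) as (a & ha & hna).
  { apply NNPP. intro hno. apply hnA. intros x hx.
    apply (eq_one_of_components hPs); auto. intros i hi.
    apply NNPP. intro ne. apply hno. exists i. split; eauto. }
  assert (exists b, b < s /\ b <> a /\ ~ trivial (Ps b)) as (b & hb & hba & hnb).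
  { apply NNPP. intro hno. apply (hnv a ha).
    apply (dprod2_virt_prod_inf htf hAB hnA hnB (factor_subgroup hPs ha)).
    intro x. split; [apply (factor_sub hPs ha)|intro hx].
    apply (factor_of_components hPs ha hx). intros i hi hia.
    apply NNPP. intro ne. apply hno. exists i. split; [|split]; eauto. }
  exists a, b. auto.
Qed.

Lemma product_subgroup_subgroup {G : Grp} {P : G -> Prop} : product_subgroup P -> is_subgroup P.
Proof. intros (A & B & _ & _ & [hP _]). exact hP. Qed.

Lemma maximal_product_sub_product {G : Grp} {Amb P : G -> Prop} :
  maximal_product_sub Amb P -> product_subgroup P.
Proof. intros (_ & hP & _). exact hP. Qed.

Lemma product_subgroup_finite_index {G : Grp} {P R Q : G -> Prop} :
  torsion_free (@fullset G) -> cond_i (@fullset G) -> cond_iii (@fullset G) ->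
  maximal_product_sub fullset P -> product_subgroup R -> finite_index Q P -> sub Q R ->
  finite_index R P.
Proof.
  intros htf hi hiii hP (A & B & hnA & hnB & hAB) hQP hQR. pose proof hAB as [hR _].
  destruct (hi R hR (fun _ _ => I) (dprod2_commens_prod_inf htf hAB hnA hnB))
    as (P' & hP' & hRP').
  assert (hPP' : same_set P P').
  { apply hiii; auto. apply (finite_index_intermediate hQP).
    - apply subgroup_inter; eapply product_subgroup_subgroup, maximal_product_sub_product; eauto.
    - intros x hx. split; [apply hQP|apply hRP', hQR]; auto.
    - intros x []; auto. }
  apply (finite_index_intermediate hQP); auto. intros x hx. apply hPP', hRP', hx.
Qed.

Section Alignment.
Context {G : Grp} {P : G -> Prop} {Ps : nat -> G -> Prop} {s : nat}
  {R : G -> Prop} {Rs : nat -> G -> Prop} {t : nat}.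
Hypotheses (htf : torsion_free (@fullset G)) (hPs : dprod_fam P Ps s) (hRs : dprod_fam R Rs t)
  (hRP : finite_index R P) (hVZ : forall g, VZ P g -> g = one).
Local Notation compP := (component P Ps s).
Local Notation compR := (component R Rs t).

Lemma centralises_finite_index_trivial z : P z -> (forall x, R x -> op z x = op x z) -> z = one.
Proof. intros hz hc. apply hVZ. split; auto. exists R. auto. Qed.

Lemma factor_centre_trivial {k z} :
  k < t -> Rs k z -> (forall y, Rs k y -> op z y = op y z) -> z = one.
Proof.
  intros hk hz hc. apply centralises_finite_index_trivial.
  - apply (finite_index_sub hRP), (factor_sub hRs hk hz).
  - intros x hx. symmetry. apply (commute_factor_component hRs hk hz hx).
    symmetry. apply hc, component_in; auto.
Qed.

Lemma factor_centralising_trivial b v :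
  b < s -> Ps b v -> (forall y, R y -> Ps b y -> op v y = op y v) -> v = one.
Proof.
  intros hb hv hc. apply hVZ. split; [apply (factor_sub hPs hb hv)|].
  assert (hfac : finite_index (fun y => Ps b y /\ R y) (Ps b)).
  { apply (finite_index_restrict hRP); [apply (factor_subgroup hPs hb)|].
    intros y hy. apply (factor_sub hPs hb hy). }
  eexists. split; [exact (finite_index_component_preimage hPs hb hfac)|].
  intros k [hk [hkb hkR]]. symmetry. apply (commute_factor_component hPs hb hv hk).
  symmetry. apply hc; auto.
Qed.

Lemma not_inf_cyclic_factor j : j < t -> ~ inf_cyclic (Rs j).
Proof.
  intros hj (g & (hRj & hgRj & hgen) & hinf).
  assert (hg : Rs j g) by (apply hgRj; reflexivity).
  assert (g = one) as hg1.
  { apply (factor_centre_trivial hj); auto. intros y hy.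
    apply (hgen _ (subgroup_commutant g)); auto. intros x ->. reflexivity. }
  apply hinf. exists [one]. intros y hy. left. symmetry.
  apply (hgen _ subgroup_trivial); auto. intros x ->. exact hg1.
Qed.

Lemma factor_of_commutant j g h : j < t -> Rs j g -> R h ->
  (forall y, P y -> op y g = op g y -> op y h = op h y) -> Rs j h.
Proof.
  intros hj hg hh hcomm. apply (factor_of_components hRs hj hh).
  intros k hk hkj. apply (factor_centre_trivial hk); [apply component_in; auto|].
  intros y hy. symmetry. apply (commute_component hRs (factor_sub hRs hk hy) hh hk).
  apply hcomm; [apply (finite_index_sub hRP), (factor_sub hRs hk hy)|].
  apply (factors_commute hRs k j); auto.
Qed.

Lemma imc_generator_support j gens g a b : j < t -> IMC (Rs j) gens -> gens g ->
  a < s -> b < s -> a <> b -> compP g a = one \/ compP g b = one.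
Proof.
  intros hj [[_ [hSRj _]] [_ hmax]] hg ha hb hab.
  apply NNPP. intros [hna hnb]%not_or_and.
  assert (hgRj : Rs j g) by auto.
  assert (hgR : R g) by apply (factor_sub hRs hj hgRj).
  assert (hgP : P g) by apply (finite_index_sub hRP _ hgR).
  set (u := compP g a).
  destruct (finite_index_power hRP (dprod_fam_subgroup hPs)
              (factor_sub hPs ha (component_in hPs hgP ha))) as [n hhR].
  set (h := pw u (S n)) in *.
  assert (hne : h <> one) by (intro E; apply hna, (htf u I n E)).
  assert (hcomm : forall y, P y -> op y g = op g y -> op y h = op h y).
  { intros y hy E. apply pw_commute, (commute_component hPs hy hgP ha E). }
  assert (hhRj : Rs j h) by (apply (factor_of_commutant j g); auto).
  (* C(g) is contained in C(h) inside Rs j, so maximality of C(g) forces equality. *)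
  assert (hCh : sub (centraliser (Rs j) h) (centraliser (Rs j) g)).
  { apply NNPP. intro hno. apply hne, (hmax g h hg hhRj). split; auto.
    intros y [hy E]. split; auto.
    apply hcomm; auto. apply (finite_index_sub hRP), (factor_sub hRs hj hy). }
  apply hnb, (factor_centralising_trivial b); [auto|apply component_in; auto|].
  intros y hyR hyb.
  (* y commutes with h, hence so does its Rs j-component, which thus commutes with g. *)
  assert (Eyg : op y g = op g y).
  { apply (commute_factor_component hRs hj hgRj hyR).
    apply hCh. split; [apply component_in; auto|].
    symmetry. apply (commute_component hRs hhR hyR hj), (factors_commute hPs a b); auto.
    apply (subgroup_pw _ (factor_subgroup hPs ha)), component_in; auto. }
  symmetry. apply (commute_component hPs (finite_index_sub hRP _ hyR) hgP hb Eyg).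
Qed.

Lemma imc_factor_within_factor j gens : j < t -> IMC (Rs j) gens ->
  (forall y, Rs j y -> y = one) \/ exists i, i < s /\ forall y, Rs j y -> Ps i y.
Proof.
  intros hj hIMC.
  assert (hin : forall g, gens g -> g <> one -> exists i, i < s /\ Ps i g).
  { intros g hg ne. pose proof hIMC as [[_ [hSRj _]] _].
    apply (factor_of_single_support hPs); auto.
    - apply (finite_index_sub hRP), (factor_sub hRs hj), hSRj, hg.
    - intros a b ha hb hab. apply (imc_generator_support j gens); auto. }
  destruct hIMC as [[_ [_ hgen]] [hind _]].
  destruct (classic (forall g, gens g -> g = one)) as [hall|(g0 & hg0)%not_all_ex_not].
  - left. intros y hy. apply (hgen _ subgroup_trivial hall), hy.
  - right. apply imply_to_and in hg0 as [hg0 ne0].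
    destruct (hin g0 hg0 ne0) as (i0 & hi0 & hg0i0).
    exists i0. split; auto. apply hgen; [apply (factor_subgroup hPs hi0)|].
    intros g hg. destruct (classic (g = one)) as [->|ne].
    { apply subgroup_one, (factor_subgroup hPs hi0). }
    destruct (classic (g = g0)) as [->|neg0]; auto.
    destruct (hin g hg ne) as (i & hi & hgi). destruct (Nat.eq_dec i i0) as [->|nii0]; auto.
    exfalso. apply (hind g g0 hg hg0 neg0 1 1); auto.
    rewrite !pw_1. apply commute_commutator, (factors_commute hPs i i0); auto.
Qed.

Lemma components_closed :
  (forall j, j < t -> inf_cyclic (Rs j) \/ exists gens, IMC (Rs j) gens) ->
  forall x i, R x -> i < s -> R (compP x i).
Proof.
  intros hfac x i hx hi. pose proof (dprod_fam_subgroup hRs) as hR.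
  assert (hfac_i : forall j y, j < t -> Rs j y -> R (compP y i)).
  { intros j y hj hy. destruct (hfac j hj) as [hcyc|[gens hgens]].
    { exfalso. exact (not_inf_cyclic_factor j hj hcyc). }
    destruct (imc_factor_within_factor j gens hj hgens) as [htriv|(i0 & hi0 & hsub)].
    - rewrite (htriv y hy), (component_one hPs hi). apply subgroup_one; auto.
    - destruct (Nat.eq_dec i i0) as [->|ne].
      + rewrite (component_factor_self hPs hi0 (hsub y hy)). apply (factor_sub hRs hj hy).
      + rewrite (component_factor_other hPs hi0 (hsub y hy) hi ne). apply subgroup_one; auto. }
  rewrite (prodl_component hRs hx), (component_prodl hPs hi).
  - apply prodl_in; auto. intros k hk. apply (hfac_i k); auto. apply component_in; auto.
  - intros k hk. apply (finite_index_sub hRP), (factor_sub hRs hk), component_in; auto.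
Qed.

End Alignment.

Theorem proposition5p2 (G : Grp) (G1 : G -> Prop)
  (hG1 : finite_index G1 (@fullset G))
  (htf2 : torsion_free (@fullset G)) (htf1 : torsion_free G1)
  (hi1 : cond_i G1) (hi2 : cond_i (@fullset G))
  (hii : cond_ii G1)
  (hiii : cond_iii (@fullset G))
  (hiv : almost_stable_centralisers (@fullset G))
  (P : G -> Prop) (Ps : nat -> G -> Prop) (s : nat)
  (hP : maximal_product_sub (@fullset G) P)
  (hPs : dprod_fam P Ps s)
  (hVZ : forall g, VZ P g -> g = one)
  (hnv : forall i, i < s -> ~ virt_prod_inf (Ps i)) :
  exists (R : G -> Prop) (Rs : nat -> G -> Prop),
    maximal_product_sub G1 R /\ dprod_fam R Rs s /\
    forall i, i < s -> finite_index (Rs i) (Ps i).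
Proof.
  destruct (two_nontrivial_factors htf2 (maximal_product_sub_product hP) hPs hnv)
    as (a & b & ha & hb & hab & hna & hnb).
  pose proof (finite_index_subgroup hG1) as hG1g.
  set (Q := components_in P Ps s G1 s).
  assert (hQP : finite_index Q P) by (apply (components_in_finite_index hPs hG1g); auto).
  assert (hQG1 : sub Q G1) by apply (components_in_sub hPs hG1g).
  destruct (hi1 Q (finite_index_subgroup hQP) hQG1
              (components_in_commens_prod_inf hPs hG1g a b htf2 hG1 ha hb hab hna hnb))
    as (R & hR & hQR).
  assert (hRP : finite_index R P)
    by apply (product_subgroup_finite_index htf2 hi2 hiii hP
                (maximal_product_sub_product hR) hQP hQR).
  destruct (hii R hR) as (t & Rs & hRs & hfac).
  exists R, (fun i x => R x /\ Ps i x). split; [exact hR|split].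
  - apply (dprod_fam_restrict hPs (finite_index_subgroup hRP) (finite_index_sub hRP)).
    apply (components_closed htf2 hPs hRs hRP hVZ hfac).
  - intros i hi.
    exact (finite_index_factor_meet hPs hG1g R i hG1 (finite_index_subgroup hRP) hQR hi).
Qed.
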